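(* Let $n\geq 6$ be even, let $k=\frac{n-2}{2}$, and let $u$ be the vertex of the friendship graph $F_k$ that is adjacent to every other vertex. Let $F_k^{u}$ be the graph obtained from $F_k$ by adding a new vertex joined by a pendant edge to $u$. Then $\rho(F^{u}_{\frac{n-2}{2}})<\sqrt{2n-4}$.
   Context: All graphs are simple and undirected. The friendship graph $F_k$ is the graph consisting of $k$ edge-disjoint triangles that all share a single common vertex. For a graph $G$ and a vertex $a$, $G^{a}$ denotes the graph obtained from $G$ by adding a new vertex and a pendant edge joining it to $a$. $\rho(G)$ denotes the spectral radius (largest adjacency eigenvalue) of $G$. *)

From HB Require Import structures.
From mathcomp Require Import all_boot all_order all_algebra.
From mathcomp Require Import reals.
Set Implicit Arguments. Unset Strict Implicit. Unset Printing Implicit Defensive.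
Import Order.TTheory GRing.Theory Num.Theory.
Local Open Scope ring_scope.

(* A simple graph on vertex set 'I_m is given by an adjacency relation
   (assumed/checked symmetric and irreflexive where used). *)

Definition adjmx (R : nzRingType) (m : nat) (e : rel 'I_m) : 'M[R]_m :=
  \matrix_(i, j) (e i j)%:R.

Definition spectral_radius (R : realType) (m : nat) (e : rel 'I_m) : R :=
  reals.sup (fun a : R => is_true (eigenvalue (adjmx R e) a)).

(* Friendship graph F_k on 'I_(2k+1): vertex 0 is the centre u,
   and for i = 0..k-1 the vertices 2i+1, 2i+2 together with 0 form a triangle. *)
Definition friendship (k : nat) : rel 'I_(k.*2.+1) :=
  fun x y => (x != y) &&
    [|| (val x == 0%N), (val y == 0%N) | ((val x).-1./2 == (val y).-1./2)].

Definition friend_center (k : nat) : 'I_(k.*2.+1) := ord0.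

Definition pendant (m : nat) (e : rel 'I_m) (a : 'I_m) : rel 'I_m.+1 :=
  fun x y =>
    match unlift ord_max x, unlift ord_max y with
    | Some x', Some y' => e x' y'
    | Some x', None => x' == a
    | None, Some y' => y' == a
    | None, None => false
    end.
Arguments friend_center k : clear implicits.
Arguments friendship k : clear implicits.

From HB Require Import structures.
From mathcomp Require Import all_boot all_order all_algebra.
From mathcomp Require Import reals zify ring lra.

(* Let v be an eigenvector of F_k^u for an eigenvalue a outside {0, 1, -1},
   and c its entry at the centre.  The eigen-equations at the two vertices of
   a triangle force (a - 1) v_j = c on every triangle vertex, the one at the
   pendant vertex gives a v_p = c, so c <> 0 (else v = 0); the equation at
   the centre then yields a^3 - a^2 - (2k+1) a + 1 = 0.  For a > 1 this forces
   a^2 - a < 2k+1, i.e. a < (1 + sqrt(8k+5))/2, and this bound is below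
   sqrt(4k) = sqrt(2n-4) as soon as k >= 2. *)

Set Implicit Arguments.
Unset Strict Implicit.
Unset Printing Implicit Defensive.

Import Order.TTheory GRing.Theory Num.Theory.
Local Open Scope ring_scope.

Lemma spectral_radius_le (R : realType) m (e : rel 'I_m) (T : R) :
  0 <= T -> (forall a, eigenvalue (adjmx R e) a -> a <= T) ->
  spectral_radius R e <= T.
Proof.
move=> T0 ub; rewrite /spectral_radius.
have [[a ea]|none] := boolp.pselect (exists a, eigenvalue (adjmx R e) a).
  by apply: ge_sup => [|b /ub]; first by exists a.
by rewrite sup_out // => -[[a ea] _]; apply: none; exists a.
Qed.

Lemma adjmx_eigenvalue_neighbour_sum (R : fieldType) m (e : rel 'I_m) a :
  eigenvalue (adjmx R e) a ->
  exists2 v : 'rV[R]_m, v != 0 & forall j, a * v 0 j = \sum_(i | e i j) v 0 i.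
Proof.
case/eigenvalueP=> v vA v0; exists v => // j.
move/rowP/(_ j): vA; rewrite !mxE => <-; rewrite [RHS]big_mkcond.
by apply: eq_bigr => i _; rewrite !mxE; case: (e i j); rewrite ?mulr1 ?mulr0.
Qed.

Lemma cubic_root_lt (R : realFieldType) (m a : R) :
  a ^+ 3 - a ^+ 2 - m * a + 1 = 0 -> 1 <= a -> a ^+ 2 - a < m.
Proof. by move=> ha a1; nra. Qed.

Lemma quadratic_root_lt_sqrt (R : rcfType) (x : R) : 2 <= x ->
  (1 + Num.sqrt (8 * x + 5)) / 2 < Num.sqrt (4 * x).
Proof.
move=> x2.
have t0 := sqrtr_ge0 (8 * x + 5); have s0 := sqrtr_ge0 (4 * x).
have tt : Num.sqrt (8 * x + 5) ^+ 2 = 8 * x + 5 by rewrite sqr_sqrtr //; lra.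
have ss : Num.sqrt (4 * x) ^+ 2 = 4 * x by rewrite sqr_sqrtr //; lra.
have t_lt : Num.sqrt (8 * x + 5) < 4 * x - 3 by nra.
nra.
Qed.

Lemma lift_max_ord0 n : lift ord_max (ord0 : 'I_n.+1) = ord0.
Proof. exact: val_inj. Qed.

(* The other non-central vertex of the triangle through [j]; meaningful for
   0 < j <= 2k only. *)
Definition partner (j : nat) : nat := if odd j then j.+1 else j.-1.

Lemma partner_bounds k j : (0 < j <= k.*2)%N -> (0 < partner j <= k.*2)%N.
Proof. by rewrite /partner; case: ifP => ?; lia. Qed.

Lemma partnerK j : (0 < j)%N -> partner (partner j) = j.
Proof.
move=> j0; rewrite {2}/partner.
by case: ifP => ?; rewrite /partner; case: ifP => ?; lia.
Qed.

Lemma friendship_mate k (x y : 'I_(k.*2.+1)) : (0 < y)%N ->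
  friendship k x y = (val x == 0%N) || (val x == partner y).
Proof.
move=> y0; rewrite /friendship /partner -val_eqE -!divn2 /=.
by case: ifP => ?; apply/idP/idP; lia.
Qed.

Local Notation friendship_pendant k := (pendant (friendship k) (friend_center k)).

Lemma friendship_pendant_col_max k (i : 'I_(k.*2.+2)) :
  friendship_pendant k i ord_max = (i == ord0).
Proof.
rewrite /pendant unlift_none -(lift_max_ord0 k.*2).
case: unliftP => [i'|] -> /=; first by rewrite (inj_eq (@lift_inj _ _)).
by rewrite (negbTE (neq_lift _ _)).
Qed.

Lemma friendship_pendant_col_center k (i : 'I_(k.*2.+2)) :
  friendship_pendant k i ord0 = (i != ord0).
Proof.
rewrite -(lift_max_ord0 k.*2) /pendant liftK.
case: unliftP => [i'|] -> /=; last exact: eqxx.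
by rewrite /friendship !orbT andbT (inj_eq (@lift_inj _ _)).
Qed.

Lemma friendship_pendant_col_triangle k (i j : 'I_(k.*2.+2)) :
  (0 < j <= k.*2)%N ->
  friendship_pendant k i j = (i == ord0) || (i == inord (partner j)).
Proof.
move=> hj; have hp := partner_bounds hj.
have hjj : (j < k.*2.+1)%N by lia.
rewrite {1}(_ : j = lift ord_max (Ordinal hjj)); last first.
  by apply/val_inj; rewrite /= /bump leqNgt hjj.
rewrite /pendant liftK -!val_eqE /= inordK; last by lia.
case: unliftP => [i'|] ->.
  rewrite friendship_mate /=; last by lia.
  by rewrite /bump leqNgt (ltn_ord i').
by apply/idP/idP => /=; lia.
Qed.

Section FriendshipPendantEigenvector.

Variables (R : fieldType) (k : nat) (a : R) (v : 'rV[R]_(k.*2.+2)).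
Hypothesis eigv :
  forall j, a * v 0 j = \sum_(i | friendship_pendant k i j) v 0 i.

Local Notation c := (v 0 ord0).

Lemma eigv_pendant : a * v 0 ord_max = c.
Proof.
by rewrite eigv (eq_bigl _ _ (@friendship_pendant_col_max k)) big_pred1_eq.
Qed.

Lemma eigv_triangle (j : 'I_(k.*2.+2)) : (0 < j <= k.*2)%N ->
  a * v 0 j = c + v 0 (inord (partner j)).
Proof.
move=> hj; have hp := partner_bounds hj.
rewrite eigv (eq_bigl _ _ (fun i => friendship_pendant_col_triangle i hj)).
rewrite (bigD1 ord0) //=.
rewrite (big_pred1 (inord (partner j))) // => i /=.
case: eqVneq => [->|_] /=; last by rewrite andbT.
by apply/esym/negbTE; rewrite -val_eqE /= inordK; lia.
Qed.

Lemma eigv_triangle_value (j : 'I_(k.*2.+2)) :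
  a != -1 -> (0 < j <= k.*2)%N ->
  (a - 1) * v 0 j = c.
Proof.
move=> a1 hj; have hp := partner_bounds hj.
have pj : (partner j < k.*2.+2)%N by lia.
have j0 : (0 < j)%N by lia.
have := @eigv_triangle (inord (partner j)).
rewrite (inordK pj) (partnerK j0) inord_val => /(_ hp) e'.
have e := eigv_triangle hj.
set w := v 0 (inord (partner j)) in e e'.
(* a times the equation at j plus the one at its partner eliminates w. *)
have : (a + 1) * ((a - 1) * v 0 j - c) = 0.
  rewrite (_ : _ * _ = a * (a * v 0 j - c - w) + (a * w - c - v 0 j)); last first.
    by ring.
  by rewrite e e'; ring.
by move/eqP; rewrite mulf_eq0 addr_eq0 (negbTE a1) subr_eq0 => /eqP.
Qed.

Lemma eigv_center : a * c = \sum_(i | i != ord0) v 0 i.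
Proof. by rewrite eigv (eq_bigl _ _ (@friendship_pendant_col_center k)). Qed.

Lemma triangle_vertex (i : 'I_(k.*2.+2)) : i != ord0 -> i != ord_max ->
  (0 < i <= k.*2)%N.
Proof. by rewrite -!val_eqE /= => ? ?; have := ltn_ord i; lia. Qed.

Lemma card_triangle_vertices :
  #|[pred i : 'I_(k.*2.+2) | (i != ord0) && (i != ord_max)]| = k.*2.
Proof.
rewrite (@eq_card _ _ [predD1 predC1 ord0 & ord_max]) => [|i]; last first.
  by rewrite !inE andbC.
by have := cardD1 ord_max (predC1 (ord0 : 'I_(k.*2.+2)));
  rewrite cardC1 card_ord inE /= add1n => -[].
Qed.

Lemma eigv_cubic : a != 0 -> a != 1 -> a != -1 -> v != 0 ->
  a ^+ 3 - a ^+ 2 - (k.*2.+1)%:R * a + 1 = 0.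
Proof.
move=> a0 a1 aN1 v0.
have center : a * (a - 1) * (a * c) = (a - 1) * c + a * c *+ k.*2.
  rewrite [in LHS]eigv_center mulr_sumr (bigD1 ord_max) //=.
  congr (_ + _); first by rewrite -eigv_pendant; ring.
  rewrite (eq_bigr (fun=> a * c)) => [|i /andP[i0 imax]]; last first.
    by rewrite -(eigv_triangle_value aN1 (triangle_vertex i0 imax)); ring.
  by rewrite sumr_const card_triangle_vertices.
have c0 : c != 0.
  apply: contraNneq v0 => c0; apply/eqP/rowP => j; rewrite mxE.
  have [->|j0] := eqVneq j ord0; first exact: c0.
  have [->|jmax] := eqVneq j ord_max.
    apply/eqP; have := eigv_pendant.
    by rewrite c0 => /eqP; rewrite mulf_eq0 (negbTE a0).
  apply/eqP; have := eigv_triangle_value aN1 (triangle_vertex j0 jmax).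
  by rewrite c0 => /eqP; rewrite mulf_eq0 subr_eq0 (negbTE a1).
apply/eqP; rewrite -(mulrI_eq0 _ (mulfI c0)); apply/eqP.
rewrite -mulr_natr in center.
transitivity (a * (a - 1) * (a * c) - ((a - 1) * c + a * c * k.*2%:R)).
  by rewrite -natr1; ring.
by rewrite center subrr.
Qed.

End FriendshipPendantEigenvector.

Lemma friendship_pendant_eigenvalue_le (R : rcfType) k a :
  eigenvalue (adjmx R (friendship_pendant k)) a ->
  a <= (1 + Num.sqrt (8 * k%:R + 5)) / 2.
Proof.
case/adjmx_eigenvalue_neighbour_sum=> v v0 eigv.
have k0 : 0 <= k%:R :> R := ler0n _ k.
have t0 := sqrtr_ge0 (8 * k%:R + 5 : R).
have tt : Num.sqrt (8 * k%:R + 5) ^+ 2 = 8 * k%:R + 5 :> R.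
  by rewrite sqr_sqrtr //; lra.
have [a_le1|a_gt1] := lerP a 1; first by nra.
have [a0 a1 aN1] : [/\ a != 0, a != 1 & a != -1] by split; apply/eqP; lra.
have := cubic_root_lt (eigv_cubic eigv a0 a1 aN1 v0) (ltW a_gt1).
rewrite -natr1 -mul2n natrM; nra.
Qed.

Theorem lemma2p5 (R : realType) (n : nat) :
  (6 <= n)%N -> ~~ odd n ->
  let k := ((n - 2)./2)%N in
  spectral_radius R (pendant (friendship k) (friend_center k))
    < Num.sqrt ((2 * n - 4)%N%:R : R).
Proof.
move=> n6 n_even; cbv zeta; set k := ((n - 2)./2)%N.
have k2 : (2 <= k)%N by rewrite /k -divn2; lia.
have -> : (2 * n - 4 = 4 * k)%N by rewrite /k -divn2; lia.
rewrite natrM.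
apply: (le_lt_trans _ (quadratic_root_lt_sqrt _)); last by rewrite ler_nat.
apply: spectral_radius_le; last exact: friendship_pendant_eigenvalue_le.
by rewrite divr_ge0 // addr_ge0 // sqrtr_ge0.
Qed.
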